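(* For every session type $S$, $\mathrm{Sub}(S) \subseteq \mathrm{Sub}_{BU}(S)$, i.e. every top-down subterm of $S$ is a bottom-up subterm of $S$.
   Context: Session types (possibly containing free variables) are given by the grammar $T ::= \mathsf{end} \mid X \mid \mu X.T \mid {?}[T_1,\dots,T_n].S \mid {!}[T_1,\dots,T_n].S \mid \&\langle l_1:T_1,\dots,l_n:T_n\rangle \mid \oplus\langle l_1:T_1,\dots,l_n:T_n\rangle$ (input, output, branch, select), where $X$ ranges over type variables and $l_i$ over labels. Types are identified up to $\alpha$-conversion, and substitutions are capture-avoiding. The set of bottom-up subterms $\mathrm{Sub}_{BU}(T)$ is defined by recursion on $T$: $\mathrm{Sub}_{BU}(\mathsf{end}) = \{\mathsf{end}\}$; $\mathrm{Sub}_{BU}(X) = \{X\}$; $\mathrm{Sub}_{BU}(\mu X.T') = \{\mu X.T'\} \cup \{S[\mu X.T'/X] \mid S \in \mathrm{Sub}_{BU}(T')\}$; $\mathrm{Sub}_{BU}(\&\langle l_i:T_i\rangle_{i}) = \{\&\langle l_i:T_i\rangle_i\} \cup \bigcup_i \mathrm{Sub}_{BU}(T_i)$, and likewise for $\oplus$; $\mathrm{Sub}_{BU}({?}[T_1,\dots,T_n].S) = \{{?}[T_1,\dots,T_n].S\} \cup \bigcup_i \mathrm{Sub}_{BU}(T_i) \cup \mathrm{Sub}_{BU}(S)$, and likewise for ${!}$. The set of top-down subterms $\mathrm{Sub}(T)$ is the smallest set of types such that $T \in \mathrm{Sub}(T)$ and which is closed under: if $\mu X.T' \in \mathrm{Sub}(T)$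 then $T'[\mu X.T'/X] \in \mathrm{Sub}(T)$; if ${?}[T_1,\dots,T_n].S$ or ${!}[T_1,\dots,T_n].S$ is in $\mathrm{Sub}(T)$ then each $T_i$ and $S$ are in $\mathrm{Sub}(T)$; if $\&\langle l_i:T_i\rangle_i$ or $\oplus\langle l_i:T_i\rangle_i$ is in $\mathrm{Sub}(T)$ then each $T_i$ is in $\mathrm{Sub}(T)$. *)

(* Session types up to alpha-conversion, represented with
   de Bruijn indices (locally nameless-free, fully de Bruijn): a type
   variable X is an index; free variables are indices pointing beyond
   all enclosing binders. Alpha-equivalent types are syntactically equal. *)
From Stdlib Require Import List Arith PeanoNat.
Import ListNotations.

Definition label := nat.

Inductive stype : Type :=
| TEnd : stype
| TVar : nat -> stype
| TMu : stype -> stype                               (* mu X. T, X = index 0 *)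
| TIn : list stype -> stype -> stype
| TOut : list stype -> stype -> stype
| TBranch : list (label * stype) -> stype
| TSelect : list (label * stype) -> stype.

Fixpoint lift (c : nat) (T : stype) : stype :=
  match T with
  | TEnd => TEnd
  | TVar n => if c <=? n then TVar (S n) else TVar n
  | TMu t => TMu (lift (S c) t)
  | TIn ts s => TIn (map (lift c) ts) (lift c s)
  | TOut ts s => TOut (map (lift c) ts) (lift c s)
  | TBranch bs => TBranch (map (fun p => (fst p, lift c (snd p))) bs)
  | TSelect bs => TSelect (map (fun p => (fst p, lift c (snd p))) bs)
  end.

Fixpoint subst (j : nat) (u : stype) (T : stype) : stype :=
  match T with
  | TEnd => TEnd
  | TVar n => if n =? j then u else if j <? n then TVar (pred n) else TVar n
  | TMu t => TMu (subst (S j) (lift 0 u) t)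
  | TIn ts s => TIn (map (subst j u) ts) (subst j u s)
  | TOut ts s => TOut (map (subst j u) ts) (subst j u s)
  | TBranch bs => TBranch (map (fun p => (fst p, subst j u (snd p))) bs)
  | TSelect bs => TSelect (map (fun p => (fst p, subst j u (snd p))) bs)
  end.

Fixpoint SubBU (T : stype) : stype -> Prop :=
  match T with
  | TEnd => fun U => U = TEnd
  | TVar n => fun U => U = TVar n
  | TMu t => fun U => U = TMu t \/ exists S, SubBU t S /\ U = subst 0 (TMu t) S
  | TIn ts s => fun U =>
      U = TIn ts s \/ fold_right (fun t acc => SubBU t U \/ acc) False ts \/ SubBU s U
  | TOut ts s => fun U =>
      U = TOut ts s \/ fold_right (fun t acc => SubBU t U \/ acc) False ts \/ SubBU s U
  | TBranch bs => fun U =>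
      U = TBranch bs \/ fold_right (fun p acc => SubBU (snd p) U \/ acc) False bs
  | TSelect bs => fun U =>
      U = TSelect bs \/ fold_right (fun p acc => SubBU (snd p) U \/ acc) False bs
  end.

Inductive Sub (T : stype) : stype -> Prop :=
| Sub_refl : Sub T T
| Sub_mu : forall t, Sub T (TMu t) -> Sub T (subst 0 (TMu t) t)
| Sub_in_arg : forall ts s t, Sub T (TIn ts s) -> List.In t ts -> Sub T t
| Sub_in_cont : forall ts s, Sub T (TIn ts s) -> Sub T s
| Sub_out_arg : forall ts s t, Sub T (TOut ts s) -> List.In t ts -> Sub T t
| Sub_out_cont : forall ts s, Sub T (TOut ts s) -> Sub T s
| Sub_branch : forall bs l t, Sub T (TBranch bs) -> List.In (l, t) bs -> Sub T t
| Sub_select : forall bs l t, Sub T (TSelect bs) -> List.In (l, t) bs -> Sub T t.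

(* Sub_BU(S) contains S and is closed under the one-step rules generating
   Sub(S), so it contains the least such set.  The only interesting case is a binder mu X.T, whose
   bottom-up subterms are mu X.T and the S'[mu X.T/X] with S' in Sub_BU(T):
   a step from S'[mu X.T/X] is either the substituted image of a step from
   S' (for an unfolding this is the substitution lemma), or S' = X and the
   step is the unfolding of mu X.T itself, landing on T[mu X.T/X]. *)

From Stdlib Require Import List Arith Lia.
Import ListNotations.

Definition children (T : stype) : list stype :=
  match T with
  | TIn ts s | TOut ts s => ts ++ [s]
  | TBranch bs | TSelect bs => map snd bs
  | _ => []
  end.

Definition is_node (T : stype) : Prop :=
  match T with TVar _ | TMu _ => False | _ => True end.

Section NodeInduction.

Variable P : stype -> Prop.
Hypothesis P_var : forall n, P (TVar n).
Hypothesis P_mu : forall t, P t -> P (TMu t).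
Hypothesis P_node : forall T, is_node T -> (forall c, In c (children T) -> P c) -> P T.

(* The inner inductions run over the argument lists of [T], so the recursive
   calls are on subterms of [T] and the fixpoint is guarded. *)
Fixpoint stype_node_ind (T : stype) : P T.
Proof.
  destruct T as [| n | t | l s | l s | l | l];
    [apply P_node; [exact I | intros c []] | apply P_var | apply P_mu, stype_node_ind | ..].
  all: apply P_node; [exact I |]; intros c Hc.
  1,2: apply in_app_iff in Hc as [Hc | [<- | []]]; [| apply stype_node_ind].
  all: induction l as [| x l IH];
    [destruct Hc | destruct Hc as [<- | Hc]; [apply stype_node_ind | apply IH, Hc]].
Qed.

End NodeInduction.

Definition map_children (f : stype -> stype) (T : stype) : stype :=
  match T with
  | TIn ts s => TIn (map f ts) (f s)
  | TOut ts s => TOut (map f ts) (f s)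
  | TBranch bs => TBranch (map (fun p => (fst p, f (snd p))) bs)
  | TSelect bs => TSelect (map (fun p => (fst p, f (snd p))) bs)
  | _ => T
  end.

Lemma stype_shape (T : stype) :
  (exists n, T = TVar n) \/ (exists t, T = TMu t) \/ is_node T.
Proof. destruct T; simpl; eauto. Qed.

Lemma is_node_map_children f T : is_node T -> is_node (map_children f T).
Proof. destruct T; auto. Qed.

Lemma children_map_children f T : children (map_children f T) = map f (children T).
Proof. destruct T; simpl; rewrite ?map_app, ?map_map; reflexivity. Qed.

Lemma map_children_comp f g T :
  map_children f (map_children g T) = map_children (fun x => f (g x)) T.
Proof. destruct T; simpl; rewrite ?map_map; reflexivity. Qed.

Lemma map_children_ext_in f g T :
  (forall c, In c (children T) -> f c = g c) -> map_children f T = map_children g T.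
Proof.
  destruct T as [| | | ts s | ts s | bs | bs]; simpl; intro Hfg; try reflexivity.
  1,2: f_equal; [apply map_ext_in; intros|]; apply Hfg, in_app_iff; simpl; auto.
  all: f_equal; apply map_ext_in; intros p Hp; rewrite Hfg; [|apply in_map]; auto.
Qed.

Lemma map_children_id_in f T :
  (forall c, In c (children T) -> f c = c) -> map_children f T = T.
Proof.
  intro Hf. transitivity (map_children (fun x => x) T).
  - now apply map_children_ext_in.
  - destruct T; simpl; rewrite ?map_id; try reflexivity.
    all: f_equal; rewrite <- map_id; apply map_ext; intros []; reflexivity.
Qed.

Lemma lift_node c T : is_node T -> lift c T = map_children (lift c) T.
Proof. destruct T; easy. Qed.

Lemma subst_node j u T : is_node T -> subst j u T = map_children (subst j u) T.
Proof. destruct T; easy. Qed.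

Ltac compare_indices :=
  repeat (cbn [lift subst];
          match goal with
          | |- context [?a =? ?b] => destruct (Nat.eqb_spec a b)
          | |- context [?a <? ?b] => destruct (Nat.ltb_spec a b)
          | |- context [?a <=? ?b] => destruct (Nat.leb_spec a b)
          end);
  subst; try reflexivity; try lia; try (f_equal; lia).

Lemma lift_lift t i c : i <= c -> lift (S c) (lift i t) = lift i (lift c t).
Proof.
  revert i c; induction t as [n | t IH | T HT IH] using stype_node_ind; intros i c Hic.
  - compare_indices.
  - cbn [lift]; f_equal; apply IH; lia.
  - rewrite (lift_node i T), (lift_node c T), !lift_node, !map_children_comp
      by auto using is_node_map_children.
    apply map_children_ext_in; auto.
Qed.

Lemma subst_lift t c u : subst c u (lift c t) = t.
Proof.
  revert c u; induction t as [n | t IH | T HT IH] using stype_node_ind; intros c u.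
  - compare_indices.
  - cbn [lift subst]; f_equal; apply IH.
  - rewrite lift_node, subst_node, map_children_comp by auto using is_node_map_children.
    apply map_children_id_in; auto.
Qed.

Lemma lift_subst t c j u : c <= j ->
  lift c (subst j u t) = subst (S j) (lift c u) (lift c t).
Proof.
  revert c j u; induction t as [n | t IH | T HT IH] using stype_node_ind; intros c j u Hcj.
  - compare_indices.
  - cbn [lift subst]; f_equal; rewrite IH, lift_lift by lia; reflexivity.
  - rewrite (subst_node j u T), (lift_node c T), !lift_node, !subst_node, !map_children_comp
      by auto using is_node_map_children.
    apply map_children_ext_in; auto.
Qed.

Lemma subst_subst t i j u v : i <= j ->
  subst j u (subst i v t) = subst i (subst j u v) (subst (S j) (lift i u) t).
Proof.
  revert i j u v; induction t as [n | t IH | T HT IH] using stype_node_ind; intros i j u v Hij.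
  - compare_indices; rewrite subst_lift; reflexivity.
  - cbn [lift subst]; f_equal; rewrite IH, lift_subst, lift_lift by lia; reflexivity.
  - rewrite (subst_node i v T), (subst_node (S j) _ T), !subst_node, !map_children_comp
      by auto using is_node_map_children.
    apply map_children_ext_in; auto.
Qed.

Inductive step : stype -> stype -> Prop :=
| step_unfold t : step (TMu t) (subst 0 (TMu t) t)
| step_child T U : In U (children T) -> step T U.

Lemma step_var_inv n V : ~ step (TVar n) V.
Proof. inversion 1; contradiction. Qed.

Lemma step_mu_inv t V : step (TMu t) V -> V = subst 0 (TMu t) t.
Proof. inversion 1; [reflexivity | contradiction]. Qed.

Lemma step_node T V : is_node T -> step T V <-> In V (children T).
Proof.
  intro HT; split; [|apply step_child].
  inversion 1; subst; [contradiction | assumption].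
Qed.

Lemma step_subst_inv T j u V : step (subst j u T) V ->
  (T = TVar j /\ step u V) \/ exists T', step T T' /\ V = subst j u T'.
Proof.
  intro Hst; destruct (stype_shape T) as [[n ->] | [[t ->] | HT]].
  - cbn [subst] in Hst; destruct (Nat.eqb_spec n j) as [<- | _].
    + left; auto.
    + destruct (j <? n); apply step_var_inv in Hst as [].
  - right; exists (subst 0 (TMu t) t); split; [constructor|].
    apply step_mu_inv in Hst as ->.
    rewrite (subst_subst t 0 j) by lia; reflexivity.
  - right; rewrite subst_node, step_node, children_map_children, in_map_iff in Hst
      by auto using is_node_map_children.
    destruct Hst as [T' [<- HT']]; exists T'; split; [apply step_node|]; auto.
Qed.

Lemma SubBU_refl T : SubBU T T.
Proof. destruct T; simpl; auto. Qed.

Lemma fold_right_or_iff {A} (P : A -> Prop) l :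
  fold_right (fun x acc => P x \/ acc) False l <-> exists x, In x l /\ P x.
Proof.
  induction l as [|a l IH]; simpl.
  - firstorder.
  - rewrite IH; firstorder congruence.
Qed.

Lemma SubBU_node T U : is_node T ->
  SubBU T U <-> U = T \/ exists c, In c (children T) /\ SubBU c U.
Proof.
  destruct T as [| | | ts s | ts s | bs | bs]; simpl; try contradiction; intros _.
  1: firstorder.
  all: rewrite fold_right_or_iff.
  1,2: setoid_rewrite in_app_iff.
  3,4: setoid_rewrite in_map_iff.
  all: firstorder congruence.
Qed.

Lemma SubBU_step_closed T U V : SubBU T U -> step U V -> SubBU T V.
Proof.
  revert U V; induction T as [n | t IH | T HT IH] using stype_node_ind; intros U V HU Hst.
  - cbn in HU; subst U; apply step_var_inv in Hst as [].
  - assert (Hunfold : step (TMu t) V -> SubBU (TMu t) V).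
    { intros ->%step_mu_inv; right; exists t; split; [apply SubBU_refl | reflexivity]. }
    destruct HU as [-> | [U' [HU' ->]]]; [auto|].
    apply step_subst_inv in Hst as [[-> Hmu] | [V' [HV' ->]]]; [auto|].
    right; exists V'; eauto.
  - rewrite SubBU_node in HU |- * by exact HT.
    destruct HU as [-> | [c [Hc HcU]]].
    + right; exists V; split; [apply step_node|apply SubBU_refl]; auto.
    + right; exists c; eauto.
Qed.

Lemma Sub_step_ind (T : stype) (P : stype -> Prop) :
  P T -> (forall U V, P U -> step U V -> P V) -> forall U, Sub T U -> P U.
Proof.
  intros HT Hstep U HU; induction HU; eauto using step.
  all: eapply Hstep; [eassumption | apply step_child; simpl].
  1-4: apply in_or_app; simpl; auto.
  all: apply (in_map snd _ (l, t)); assumption.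
Qed.

Theorem mainTheorem3 : forall S U : stype, Sub S U -> SubBU S U.
Proof.
  intros S; apply Sub_step_ind; [apply SubBU_refl | apply SubBU_step_closed].
Qed.
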